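(* For an algebraic range-query function $Q$, given an array of size $n$, Bin Buffering uses a buffer of $n/b$ tuples computed in time $O(n)$ and updated in time $O(b)$ to support queries in time $O(n/b+b)$. Choosing $b=\sqrt{n}$ minimizes the query complexity to $O(\sqrt{n})$. If $Q$ is linear then updates take constant time.
   Context: Arrays are indexed $a_0,\ldots,a_{n-1}$. A range-query function $Q:\mathcal{A}^{R}\to R$ (where $\mathcal{A}^R$ is the set of finite arrays with values in $R$) is distributive if there is $F$ with $Q(a_0,\ldots,a_k,a_{k+1},\ldots,a_{n-1})=F(Q(a_0,\ldots,a_k),Q(a_{k+1},\ldots,a_{n-1}))$ for all $0\le k<n-1$. A real-valued range-query function $Q$ is algebraic if it can be computed from an intermediate tuple-valued distributive range-query function $G:\mathcal{A}^{\mathbb{R}}\to\mathbb{R}^m$ ($m$ a small fixed integer) with combining function $F:\mathcal{A}^{\mathbb{R}^m}\to\mathbb{R}^m$, i.e. $G(a_0,\ldots,a_k,a_{k+1},\ldots,a_{n-1})=F(G(a_0,\ldots,a_k),G(a_{k+1},\ldots,a_{n-1}))$; the cost of $G$ and $F$ is assumed independent of the values and constant per combination. Bin Buffering: given an integer $b$ dividing $n$, precompute the $n/b$ components $B_0=G(a_0,\ldots,a_{b-1})$, $B_1=G(a_b,\ldots,a_{2b-1})$, $\ldots$, $B_{n/b-1}=G(a_{n-b},\ldots,a_{n-1})$, and answer queries via $G(a_k,\ldots,a_l)=F(G(a_k,\ldots,a_{b\lceil k/b\rceil-1}),B_{\lceil k/b\rceil},\ldots,B_{\lfloor l/b\rfloor-1},G(a_{b\lfloor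 l/b\rfloor},\ldots,a_l))$. An update changes one array entry $a_k$ by $\Delta=a'_k-a_k$. $Q$ (with intermediate $G$) is linear if $G(a_0+\alpha d_0,\ldots,a_{n-1}+\alpha d_{n-1})=G(a_0,\ldots,a_{n-1})+\alpha G(d_0,\ldots,d_{n-1})$ for all arrays $a,d$ and constants $\alpha$. *)

From HB Require Import structures.
From mathcomp Require Import all_boot all_order all_algebra.
From mathcomp Require Import reals.
Set Implicit Arguments. Unset Strict Implicit. Unset Printing Implicit Defensive.
Import Order.TTheory GRing.Theory Num.Theory.
Local Open Scope ring_scope.

(* Cost model: a "costed" value is a pair (value, number of elementary
   operations performed to obtain it).  Elementary operations, each of
   constant cost: evaluating G on a one-element array, one binary
   application of the combining function F, one vector addition, one scalar
   subtraction, one application of the final map h (Q = h o G).  Index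
   arithmetic and array/buffer accesses are free (RAM model). *)

Section BinBuffering.
Variables (R : realType) (m : nat).
Local Notation T := 'rV[R]_m.
Variable G : seq R -> T.
Variable F : T -> T -> T.

Definition distributive_rq : Prop :=
  forall s1 s2 : seq R, s1 != [::] -> s2 != [::] ->
    G (s1 ++ s2) = F (G s1) (G s2).

Definition linear_rq : Prop :=
  forall (a d : seq R) (alpha : R), size a = size d ->
    G [seq x.1 + alpha * x.2 | x <- zip a d] = G a + alpha *: G d.

Definition leaf (x : R) : T * nat := (G [:: x], 1%N).
Definition comb (u v : T * nat) : T * nat := (F u.1 v.1, (u.2 + v.2).+1).
Definition free (v : T) : T * nat := (v, 0%N).

Definition comb_all (s : seq (T * nat)) : T * nat :=
  match s with [::] => (0, 0%N) | p :: ps => foldl comb p ps end.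

Definition eval_list (s : seq R) : T * nat := comb_all (map leaf s).

Definition segment (a : seq R) (i len : nat) : seq R := take len (drop i a).
Definition eval_seg (a : seq R) (i len : nat) : T * nat :=
  eval_list (segment a i len).

Definition buffer (a : seq R) (b : nat) : seq (T * nat) :=
  [seq eval_seg a (j * b) b | j <- iota 0 (size a %/ b)].
Definition buffer_vals (a : seq R) (b : nat) : seq T := map fst (buffer a b).
Definition buffer_cost (a : seq R) (b : nat) : nat := sumn (map snd (buffer a b)).

(* Query G(a_k..a_l) via
   F(G(a_k..a_{b ceil(k/b) - 1}), B_{ceil(k/b)}, ..., B_{floor(l/b)-1},
     G(a_{b floor(l/b)}..a_l)),
   empty pieces omitted; if a_k..a_l lies strictly inside one bin (so that
   ceil(k/b) > floor(l/b)), it is computed directly. *)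
Definition query (a : seq R) (Bv : seq T) (b k l : nat) : T * nat :=
  let lo := ((k + b.-1) %/ b)%N in
  let hi := (l %/ b)%N in
  if (hi < lo)%N then eval_seg a k (l - k).+1
  else comb_all
    ((if (k < lo * b)%N then [:: eval_seg a k (lo * b - k)] else [::])
     ++ [seq free v | v <- take (hi - lo) (drop lo Bv)]
     ++ [:: eval_seg a (hi * b) (l - hi * b).+1]).

Definition query_Q (h : T -> R) (a : seq R) (Bv : seq T) (b k l : nat)
  : R * nat :=
  let r := query a Bv b k l in (h r.1, r.2.+1).

Definition update (a : seq R) (Bv : seq T) (b k : nat) (x : R) : seq T * nat :=
  let a' := set_nth 0 a k x in
  let j := (k %/ b)%N in
  let r := eval_seg a' (j * b) b in
  (set_nth 0 Bv j r.1, r.2).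

(* Update for linear G: B_j := B_j + G(0,..,0,Delta,0,..,0) where the
   array is the bin of length b with Delta = x - a_k at offset p = k mod b;
   by distributivity G(0^p,Delta,0^q) = F(G(0^p), F(G(Delta), G(0^q))) and
   G(0^r) = 0 by linearity (empty zero-blocks omitted). *)
Definition lin_update (a : seq R) (Bv : seq T) (b k : nat) (x : R)
  : seq T * nat :=
  let j := (k %/ b)%N in
  let p := (k %% b)%N in
  let q := (b - p).-1 in
  let e := leaf (x - nth 0 a k) in
  let e1 := if (0 < q)%N then comb e (free 0) else e in
  let e2 := if (0 < p)%N then comb (free 0) e1 else e1 in
  (set_nth 0 Bv j (nth 0 Bv j + e2.1), (e2.2 + 2)%N).

End BinBuffering.

(* Distributivity lets G of a concatenation of nonempty pieces be computed by
   folding F over the G-values of the pieces.  A query range [k, l] splits into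
   a partial bin on each side, evaluated directly in O(b), and at most n/b whole
   bins read from the buffer, so it costs O(n/b + b).  An update changes a single
   bin, which is recomputed in O(b).  If G is linear, the new bin value is the old
   one plus G of the bin that is zero except for a_k' - a_k at the updated
   position; G vanishes on zero arrays, so by distributivity this costs O(1).
   Finally n/b + b >= 2 sqrt n by AM-GM, with equality at b = sqrt n. *)

From Pilot Require Import Defs.
From mathcomp Require Import all_boot all_order all_algebra.
From mathcomp Require Import reals.
From mathcomp Require Import zify.
Set Implicit Arguments. Unset Strict Implicit. Unset Printing Implicit Defensive.
Import GRing.Theory.
Local Open Scope ring_scope.

Section Segment.
Variable R : realType.
Implicit Types a : seq R.

Lemma size_segment a i L : size (segment a i L) = minn L (size a - i).
Proof. by rewrite /segment size_take size_drop /minn; case: ifP; lia. Qed.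

Lemma nth_segment a i L t : (t < L)%N -> nth 0 (segment a i L) t = nth 0 a (i + t).
Proof. by move=> t_lt; rewrite /segment nth_take // nth_drop. Qed.

Lemma segment0 a i : segment a i 0 = [::].
Proof. by rewrite /segment take0. Qed.

Lemma segment_cat a i j L1 L2 : (i + L1)%N = j ->
  segment a i L1 ++ segment a j L2 = segment a i (L1 + L2).
Proof. by move=> <-; rewrite /segment takeD drop_drop addnC. Qed.

Lemma segment_nil a i L : (0 < L)%N -> (i < size a)%N -> segment a i L != [::].
Proof. by move=> L_gt0 i_lt; rewrite -size_eq0 size_segment; lia. Qed.

Lemma flatten_bins a b i t :
  flatten [seq segment a (j * b) b | j <- iota i t] = segment a (i * b) (t * b).
Proof.
elim: t i => [|t IH] i /=; first by rewrite segment0.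
by rewrite IH segment_cat; [rewrite mulSn | rewrite mulSnr].
Qed.

Lemma size_set_nth_in a k (x : R) : (k < size a)%N -> size (set_nth 0 a k x) = size a.
Proof. by move=> k_lt; rewrite size_set_nth (maxn_idPr k_lt). Qed.

Lemma segment_set_nth_out a i L k (x : R) : (k < size a)%N ->
  (k < i \/ i + L <= k)%N -> segment (set_nth 0 a k x) i L = segment a i L.
Proof.
move=> k_lt k_out; apply: (@eq_from_nth _ 0) => [|t].
  by rewrite !size_segment size_set_nth_in.
rewrite size_segment => t_lt; rewrite !nth_segment ?nth_set_nth /=; try lia.
by case: eqP => //; lia.
Qed.

Lemma segment_set_nth_in a i L k (x : R) : (i <= k < i + L)%N -> (k < size a)%N ->
  segment (set_nth 0 a k x) i L = set_nth 0 (segment a i L) (k - i) x.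
Proof.
move=> /andP[ik kiL] k_lt; apply: (@eq_from_nth _ 0) => [|t].
  by rewrite size_set_nth !size_segment size_set_nth_in //; lia.
rewrite size_segment size_set_nth_in // => t_lt.
rewrite nth_segment ?nth_set_nth /= ?nth_segment; try lia.
by congr (if _ then _ else _); apply/eqP/eqP; lia.
Qed.

End Segment.

Section Combination.
Variables (R : realType) (m : nat).
Local Notation T := 'rV[R]_m.
Variables (G : seq R -> T) (F : T -> T -> T).

Lemma foldl_comb_val (p : T * nat) ps :
  (foldl (comb F) p ps).1 = foldl F p.1 (map fst ps).
Proof. by elim: ps p => [|q ps IH] p //=; rewrite IH. Qed.

Lemma foldl_comb_cost (p : T * nat) ps :
  (foldl (comb F) p ps).2 = (p.2 + sumn (map snd ps) + size ps)%N.
Proof. by elim: ps p => [|q ps IH] p /=; rewrite ?addn0 // IH /=; lia. Qed.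

Lemma comb_all_cost ps :
  ((comb_all F ps).2 <= sumn (map snd ps) + (size ps).-1)%N.
Proof. by case: ps => [|p ps] //=; rewrite foldl_comb_cost. Qed.

Lemma eval_list_cost s : ((eval_list G F s).2 <= 2 * size s)%N.
Proof.
apply: leq_trans (comb_all_cost _) _.
have -> : sumn (map snd (map (leaf G) s)) = size s by elim: s => //= ? ? ->.
by rewrite size_map; lia.
Qed.

Lemma eval_seg_cost a i L : ((eval_seg G F a i L).2 <= 2 * L)%N.
Proof.
apply: leq_trans (eval_list_cost _) _.
by rewrite leq_mul2l size_take_min geq_minl orbT.
Qed.

Hypothesis G_distr : distributive_rq G F.

Lemma foldl_G s0 ss : s0 != [::] -> all (fun s => s != [::]) ss ->
  foldl F (G s0) (map G ss) = G (s0 ++ flatten ss).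
Proof.
elim: ss s0 => [|s ss IH] s0 /= s0_nil; first by rewrite cats0.
case/andP => s_nil ss_nil; rewrite -G_distr // IH ?catA //.
by case: s0 s0_nil.
Qed.

Lemma comb_all_val ps ss : ss != [::] -> all (fun s => s != [::]) ss ->
  map fst ps = map G ss -> (comb_all F ps).1 = G (flatten ss).
Proof.
case: ss => [|s ss] // _ /andP[s_nil ss_nil].
case: ps => [|p ps] //= [p_val ps_val].
by rewrite foldl_comb_val p_val ps_val foldl_G.
Qed.

Lemma eval_list_val s : s != [::] -> (eval_list G F s).1 = G s.
Proof.
move=> s_nil; rewrite (@comb_all_val _ [seq [:: x] | x <- s]).
- by congr G; elim: s {s_nil} => //= x s ->.
- by case: s s_nil.
- by rewrite all_map; apply/allP.
- by rewrite -!map_comp.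
Qed.

Lemma eval_seg_val a i L : (0 < L)%N -> (i < size a)%N ->
  (eval_seg G F a i L).1 = G (segment a i L).
Proof. by move=> L_gt0 i_lt; rewrite eval_list_val ?segment_nil. Qed.

Lemma G_zeros_cat p s : (0 < p)%N -> s != [::] -> G (nseq p 0) = 0 ->
  G (nseq p 0 ++ s) = F 0 (G s).
Proof. by case: p => // p _ s_nil <-; rewrite G_distr. Qed.

Lemma G_cat_zeros q s : (0 < q)%N -> s != [::] -> G (nseq q 0) = 0 ->
  G (s ++ nseq q 0) = F (G s) 0.
Proof. by case: q => // q _ s_nil <-; rewrite G_distr. Qed.

Lemma impulse_val p q d : G (nseq p 0) = 0 -> G (nseq q 0) = 0 ->
  let e := if (0 < q)%N then comb F (leaf G d) (Defs.free 0) else leaf G d in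
  (if (0 < p)%N then comb F (Defs.free 0) e else e).1 = G (nseq p 0 ++ d :: nseq q 0).
Proof.
move=> Gp0 Gq0 e.
have Gdq : e.1 = G (d :: nseq q 0).
  by rewrite /e; case: posnP => [-> | q_gt0] //=; rewrite -(G_cat_zeros (s := [:: d]) q_gt0).
by case: posnP => [-> | p_gt0] //=; rewrite G_zeros_cat // Gdq.
Qed.

End Combination.

Section Linear.
Variables (R : realType) (m : nat) (G : seq R -> 'rV[R]_m).
Hypothesis G_lin : linear_rq G.

Lemma linear_rq_nseq0 r : G (nseq r 0) = 0.
Proof.
have zip0 : [seq x.1 + 1 * x.2 | x <- zip (nseq r 0) (nseq r 0)] = nseq r (0 : R).
  by elim: r => //= r ->; rewrite mul1r addr0.
have := @G_lin (nseq r 0) (nseq r 0) 1 erefl.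
by rewrite zip0 scale1r -{1}[G (nseq r 0)]addr0 => /addrI <-.
Qed.

Lemma linear_rq_set_nth (s : seq R) i (x : R) : (i < size s)%N ->
  G (set_nth 0 s i x) = G s + G (nseq i 0 ++ (x - s`_i) :: nseq (size s - i.+1) 0).
Proof.
move=> i_lt; have size_d : size (nseq i 0 ++ (x - s`_i) :: nseq (size s - i.+1) 0) = size s.
  by rewrite size_cat /= !size_nseq; lia.
rewrite -[G (_ ++ _)]scale1r -G_lin //; congr G.
have size_set : size (set_nth 0 s i x) = size s by rewrite size_set_nth (maxn_idPr i_lt).
apply: (@eq_from_nth _ 0) => [|t]; first by rewrite size_set size_map size_zip size_d minnn.
rewrite size_set => t_lt.
rewrite nth_set_nth (nth_map (0, 0)) ?size_zip ?size_d ?minnn // nth_zip //= nth_cat size_nseq.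
case: (ltngtP t i) => [t_lt_i | i_lt_t | ->].
- by rewrite nth_nseq t_lt_i mulr0 addr0.
- by rewrite -[(t - i)%N]prednK ?subn_gt0 //= nth_nseq if_same mulr0 addr0.
- by rewrite subnn /= mul1r addrC subrK.
Qed.

End Linear.

Section NatArith.
Local Open Scope nat_scope.

Lemma ceil_divM_bounds k b : 0 < b -> k <= (k + b.-1) %/ b * b <= k + b.-1.
Proof.
move=> b_gt0; rewrite leq_divM andbT.
by have := ltn_ceil (k + b.-1) b_gt0; rewrite mulSnr; lia.
Qed.

Lemma floor_divM_bounds l b : 0 < b -> l %/ b * b <= l < l %/ b * b + b.
Proof. by move=> b_gt0; rewrite leq_divM -mulSnr ltn_ceil. Qed.

Lemma neq_divn_out_bin k b j : 0 < b -> j != k %/ b -> k < j * b \/ j * b + b <= k.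
Proof.
move=> b_gt0 j_neq; case: (ltnP k (j * b)) => [|jb_le]; [by left | right].
rewrite leqNgt; apply: contra j_neq => k_lt.
by rewrite eqn_leq leq_divRL // jb_le -ltnS ltn_divLR // mulSnr.
Qed.

Lemma addn_le_of_muln_eq b p q : b * b = p * q -> b + b <= p + q.
Proof.
move=> E; rewrite -(leq_exp2r _ _ (isT : 0 < 2)) addnn -mul2n expnMn -[b ^ 2]mulnn E.
exact: nat_AGM2.
Qed.

End NatArith.

Section BinBuffer.
Variables (R : realType) (m : nat) (G : seq R -> 'rV[R]_m) (F : 'rV[R]_m -> 'rV[R]_m -> 'rV[R]_m).
Variables (a : seq R) (b : nat).
Local Notation Bv := (buffer_vals G F a b).

Lemma size_buffer_vals : size Bv = (size a %/ b)%N.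
Proof. by rewrite size_map size_map size_iota. Qed.

Lemma bin_le j : (j < size a %/ b)%N -> (j * b + b <= size a)%N.
Proof.
move=> j_lt; rewrite -mulSnr; apply: leq_trans (leq_divM (size a) b).
by rewrite leq_mul2r j_lt orbT.
Qed.

Lemma buffer_cost_le : (buffer_cost G F a b <= 2 * size a)%N.
Proof.
have cost_bins i t : (sumn [seq (eval_seg G F a (j * b) b).2 | j <- iota i t] <= t * (2 * b))%N.
  by elim: t i => [|t IH] i //=; rewrite mulSn leq_add ?eval_seg_cost.
rewrite /buffer_cost /buffer -map_comp; apply: leq_trans (cost_bins _ _) _.
by rewrite mulnCA leq_mul2l leq_divM orbT.
Qed.

Hypothesis b_gt0 : (0 < b)%N.
Hypothesis G_distr : distributive_rq G F.

Lemma nth_buffer_vals j : (j < size a %/ b)%N -> nth 0 Bv j = G (segment a (j * b) b).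
Proof.
move=> j_lt; rewrite (nth_map (0, 0%N)) ?size_map ?size_iota // (nth_map 0%N) ?size_iota //.
by rewrite nth_iota // eval_seg_val //; have := bin_le j_lt; lia.
Qed.

Lemma take_drop_buffer_vals lo hi : (lo <= hi <= size a %/ b)%N ->
  take (hi - lo) (drop lo Bv) = [seq G (segment a (j * b) b) | j <- iota lo (hi - lo)].
Proof.
move=> /andP[lo_le hi_le]; apply: (@eq_from_nth _ 0) => [|i].
  by rewrite size_take size_drop size_buffer_vals size_map size_iota; case: ifP; lia.
rewrite size_take size_drop size_buffer_vals => i_lt.
have {}i_lt : (i < hi - lo)%N by move: i_lt; case: ifP; lia.
rewrite nth_take // nth_drop nth_buffer_vals; last lia.
by rewrite (nth_map 0%N) ?size_iota // nth_iota.
Qed.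

Hypothesis b_dvd : (b %| size a)%N.

Lemma query_val k l : (k <= l)%N -> (l < size a)%N ->
  (query G F a Bv b k l).1 = G (segment a k (l - k).+1).
Proof.
move=> kl l_lt; rewrite /query.
have /andP[lo_ge lo_le] := ceil_divM_bounds k b_gt0.
have /andP[hi_le hi_gt] := floor_divM_bounds l b_gt0.
set lo := ((k + b.-1) %/ b)%N in lo_ge lo_le *; set hi := (l %/ b)%N in hi_le hi_gt *.
case: ltnP => [_ | lo_hi]; first by rewrite eval_seg_val //; lia.
have hi_lt : (hi < size a %/ b)%N by rewrite ltn_divLR // divnK.
have lohi_b : (lo * b <= hi * b)%N by rewrite leq_mul2r lo_hi orbT.
rewrite take_drop_buffer_vals; last by rewrite lo_hi ltnW.
set pre := (if _ then _ else _).
set spre := if (k < lo * b)%N then [:: segment a k (lo * b - k)] else [::].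
set bins := [seq segment a (j * b) b | j <- iota lo (hi - lo)].
set last := segment a (hi * b) (l - hi * b).+1.
have last_nil : last != [::] by apply: segment_nil; lia.
rewrite (comb_all_val G_distr (ss := spre ++ bins ++ [:: last])).
- rewrite !flatten_cat flatten_bins /= cats0.
  have -> : flatten spre = segment a k (lo * b - k).
    rewrite /spre; case: ifP => [_ | k_ge]; first by rewrite /= cats0.
    by rewrite (_ : lo * b - k = 0)%N ?segment0 //; lia.
  rewrite /last !segment_cat; last by rewrite -mulnDl subnKC.
    by congr (G (segment a k _)); rewrite mulnBl; lia.
  lia.
- by rewrite -size_eq0 !size_cat /= addn1 addnS.
- rewrite !all_cat /= last_nil !andbT; apply/andP; split.
    by rewrite /spre; case: ifP => //= k_lt; rewrite andbT segment_nil //; lia.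
  rewrite /bins all_map; apply/allP => j; rewrite mem_iota => /andP[_ j_lt] /=.
  have /bin_le : (j < size a %/ b)%N by lia.
  by move=> j_bin; apply: segment_nil => //; lia.
- rewrite !map_cat -map_comp; congr (_ ++ _ ++ _).
  + by rewrite /pre /spre; case: ifP => //= k_lt; rewrite eval_seg_val //; lia.
  + by rewrite /bins -!map_comp.
  + by rewrite /= eval_seg_val //; lia.
Qed.

Lemma query_cost k l : (k <= l)%N -> (l < size a)%N ->
  ((query G F a Bv b k l).2 <= 4 * b + size a %/ b)%N.
Proof.
move=> kl l_lt; rewrite /query.
have /andP[lo_ge lo_le] := ceil_divM_bounds k b_gt0.
have /andP[hi_le hi_gt] := floor_divM_bounds l b_gt0.
set lo := ((k + b.-1) %/ b)%N in lo_ge lo_le *; set hi := (l %/ b)%N in hi_le hi_gt *.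
have hi_lt : (hi < size a %/ b)%N by rewrite ltn_divLR // divnK.
case: ltnP => [hi_lo | _].
  have : (hi.+1 * b <= lo * b)%N by rewrite leq_mul2r hi_lo orbT.
  by rewrite mulSnr => hilo_b; apply: leq_trans (eval_seg_cost _ _ _ _ _) _; lia.
apply: leq_trans (comb_all_cost _ _) _; rewrite !map_cat !sumn_cat !size_cat.
set pre := (if _ then _ else _).
have pre_cost : (sumn (map snd pre) + size pre <= 2 * b)%N.
  rewrite /pre; case: ifP => //= _; have := eval_seg_cost G F a k (lo * b - k); lia.
have free_cost (s : seq 'rV[R]_m) : sumn (map snd (map (@Defs.free R m) s)) = 0%N by elim: s.
have mid_size : (size (take (hi - lo) (drop lo Bv)) <= hi - lo)%N by rewrite size_take_min geq_minl.
have := eval_seg_cost G F a (hi * b) (l - hi * b).+1.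
by rewrite free_cost size_map /=; lia.
Qed.

End BinBuffer.

Section Update.
Variables (R : realType) (m : nat) (G : seq R -> 'rV[R]_m) (F : 'rV[R]_m -> 'rV[R]_m -> 'rV[R]_m).
Variables (a : seq R) (b k : nat) (x : R).
Local Notation Bv := (buffer_vals G F a b).
Local Notation a' := (set_nth 0 a k x).

Lemma update_cost : ((update G F a Bv b k x).2 <= 2 * b)%N.
Proof. exact: eval_seg_cost. Qed.

Lemma lin_update_cost : ((lin_update G F a Bv b k x).2 <= 5)%N.
Proof. by rewrite /lin_update /=; case: (0 < _)%N; case: (0 < _)%N. Qed.

Hypotheses (b_gt0 : (0 < b)%N) (b_dvd : (b %| size a)%N) (k_lt : (k < size a)%N).
Hypothesis G_distr : distributive_rq G F.

Let bin_lt : (k %/ b < size a %/ b)%N.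
Proof. by rewrite ltn_divLR // divnK. Qed.

Let bin_k : (k %/ b * b <= k < k %/ b * b + b)%N.
Proof. exact: floor_divM_bounds. Qed.

Lemma update_val : (update G F a Bv b k x).1 = buffer_vals G F a' b.
Proof.
have size_a' := size_set_nth_in x k_lt.
apply: (@eq_from_nth _ 0) => [|j].
  by rewrite size_set_nth !size_buffer_vals size_a'; apply/maxn_idPr.
rewrite size_set_nth size_buffer_vals (maxn_idPr bin_lt) => j_lt.
rewrite nth_set_nth /= [in RHS]nth_buffer_vals ?size_a' //.
case: eqP => [-> | /eqP j_neq]; first by rewrite eval_seg_val // size_a'; have := bin_k; lia.
by rewrite nth_buffer_vals // segment_set_nth_out //; apply: neq_divn_out_bin.
Qed.

Lemma lin_update_val : linear_rq G -> (lin_update G F a Bv b k x).1 = (update G F a Bv b k x).1.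
Proof.
move=> G_lin; rewrite /lin_update /update /=; congr set_nth.
rewrite impulse_val ?(linear_rq_nseq0 G_lin) // eval_seg_val ?size_set_nth_in //; last lia.
rewrite segment_set_nth_in // (linear_rq_set_nth G_lin); last by rewrite size_segment; lia.
have size_bin : size (segment a (k %/ b * b) b) = b.
  by have := bin_le bin_lt; rewrite size_segment; lia.
have k_bin : (k - k %/ b * b = k %% b)%N by rewrite {1}(divn_eq k b) addKn.
rewrite nth_buffer_vals // size_bin k_bin nth_segment ?ltn_pmod // -divn_eq.
by congr (_ + G (_ ++ _ :: nseq _ 0)); lia.
Qed.

End Update.

Theorem lemma1 : exists c : nat,
  forall (R : realType) (m : nat) (G : seq R -> 'rV[R]_m)
         (F : 'rV[R]_m -> 'rV[R]_m -> 'rV[R]_m) (h : 'rV[R]_m -> R),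
  distributive_rq G F ->
  forall (n b : nat) (a : seq R), size a = n -> (0 < b)%N -> (b %| n)%N ->
  let Bv := buffer_vals G F a b in
  [/\ (* the buffer consists of n/b tuples, the correct bin values *)
      [/\ size Bv = (n %/ b)%N,
          (forall j, (j < n %/ b)%N ->
            nth 0 Bv j = G (segment a (j * b) b))
        & (* computed in time O(n) *)
          (buffer_cost G F a b <= c * n)%N],
      (* queries answered correctly in time O(n/b + b) *)
      (forall k l, (k <= l)%N -> (l < n)%N ->
         (query_Q G F h a Bv b k l).1 = h (G (segment a k (l - k).+1))
         /\ ((query_Q G F h a Bv b k l).2 <= c * (n %/ b + b))%N),
      (* updates maintain the buffer in time O(b) *)
      (forall k x, (k < n)%N ->
         (update G F a Bv b k x).1 = buffer_vals G F (set_nth 0 a k x) b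
         /\ ((update G F a Bv b k x).2 <= c * b)%N),
      (* b = sqrt n minimizes n/b + b, and queries then take O(sqrt n) *)
      ((b * b)%N = n ->
         (forall b', (0 < b')%N -> (b' %| n)%N ->
            (n %/ b + b <= n %/ b' + b')%N)
         /\ (forall k l, (k <= l)%N -> (l < n)%N ->
               ((query_Q G F h a Bv b k l).2 <= c * b)%N))
    & (* if Q is linear, updates take constant time *)
      (linear_rq G ->
       forall k x, (k < n)%N ->
         (lin_update G F a Bv b k x).1 = buffer_vals G F (set_nth 0 a k x) b
         /\ ((lin_update G F a Bv b k x).2 <= c)%N)].
Proof.
exists 6%N => R m G F h G_distr n b a <- b_gt0 b_dvd Bv.
have query_Q_cost k l : (k <= l)%N -> (l < size a)%N ->
    ((query_Q G F h a Bv b k l).2 <= 4 * b + size a %/ b + 1)%N.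
  by move=> kl l_lt; rewrite /= addn1 ltnS query_cost.
split.
- split; [exact: size_buffer_vals | exact: nth_buffer_vals |].
  by apply: leq_trans (buffer_cost_le _ _ _ _) _; rewrite leq_mul2r orbT.
- move=> k l kl l_lt; split; first by rewrite /= query_val.
  by apply: leq_trans (query_Q_cost k l kl l_lt) _; lia.
- move=> k x k_lt; split; first exact: update_val.
  by apply: leq_trans (update_cost _ _ _ _ _ _) _; rewrite leq_mul2r orbT.
- move=> bb; have nb : (size a %/ b = b)%N by rewrite -bb mulnK.
  split=> [b' b'_gt0 b'_dvd | k l kl l_lt].
    by rewrite nb; apply: addn_le_of_muln_eq; rewrite divnK.
  by apply: leq_trans (query_Q_cost k l kl l_lt) _; rewrite nb; lia.
- move=> G_lin k x k_lt; split; first by rewrite lin_update_val // update_val.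
  exact: leq_trans (lin_update_cost _ _ _ _ _ _) _.
Qed.
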